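(* Let $k,\ell$ be positive integers. Then, as formal power series in $t$, \[ \sum_{c\ge0}\big(\operatorname{re}_k(\ell,c)-\operatorname{ro}_k(\ell,c)\big)\frac{t^{c}}{c!}=\exp\Big(\sum_{g\in G_k(\ell)}(-1)^{\ell g+1}\frac{\ell^{g-1}}{g}t^{g}\Big). \]
   Context: $G_k(\ell)=\{g\in\mathbb N:\gcd(g\ell,k)=g\}$. A permutation of cycle type $(\ell)^c$ is a permutation of an $\ell c$-element set whose disjoint cycle decomposition consists of exactly $c$ cycles, all of length $\ell$ (for $c=0$ it is the empty permutation). $\operatorname{re}_k(\ell,c)$ (resp. $\operatorname{ro}_k(\ell,c)$) denotes the number of even (resp. odd) permutations $\tau$ of the same $\ell c$-element set with $\tau^k=\sigma$, where $\sigma$ is any fixed permutation of cycle type $(\ell)^c$ (this number does not depend on the choice of $\sigma$). *)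

From HB Require Import structures.
From mathcomp Require Import all_boot all_order all_algebra all_fingroup.
Set Implicit Arguments. Unset Strict Implicit. Unset Printing Implicit Defensive.
Import Order.TTheory GRing.Theory Num.Theory.

Definition fps := nat -> rat.

Definition fps_mul (f g : fps) : fps :=
  fun n => (\sum_(i < n.+1) f i * g (n - i)%N)%R.

Definition fps_one : fps := fun n => if n == 0%N then 1%R else 0%R.

Fixpoint fps_pow (f : fps) (m : nat) : fps :=
  match m with 0 => fps_one | m'.+1 => fps_mul f (fps_pow f m') end.

(* exp(f) = sum_m f^m / m!, for f with zero constant term; then only the
   terms m <= n contribute to the coefficient of t^n. *)
Definition fps_exp (f : fps) : fps :=
  fun n => (\sum_(m < n.+1) fps_pow f m n / (m`!)%:R)%R.

Definition Gk (k l g : nat) : bool := gcdn (g * l) k == g.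

Definition Fseries (k l : nat) : fps :=
  fun g => if Gk k l g
           then ((-1) ^+ (l * g).+1 * (l ^ g.-1)%N%:R / g%:R)%R
           else 0%R.

Definition has_cycle_type (l c : nat) (T : finType) (s : {perm T}) : Prop :=
  #|porbits s| = c /\ forall x : T, #|porbit s x| = l.

Definition re_k (k : nat) (T : finType) (s : {perm T}) : nat :=
  #|[set t : {perm T} | (t ^+ k == s)%g && ~~ odd_perm t]|.
Definition ro_k (k : nat) (T : finType) (s : {perm T}) : nat :=
  #|[set t : {perm T} | (t ^+ k == s)%g && odd_perm t]|.

From HB Require Import structures.
From mathcomp Require Import all_boot all_order all_algebra all_fingroup.
From mathcomp Require Import zify ring.
Import Order.TTheory GRing.Theory Num.Theory.
Set Implicit Arguments. Unset Strict Implicit. Unset Printing Implicit Defensive.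

(* For a sigma-stable set A, let R(A) be the sum of the signs of the
   permutations t supported on A with t^k = sigma on A.  Fix x in A.  Such a
   t splits uniquely as (its cycle through x) * (a root on the rest of A), so
   R(A) is the sum, over the "root cycles" t1 through x, of
   sgn t1 * R(A minus the cycle of t1)  (signed_roots_decomp).
   A root cycle of length n has n = l g with g = gcd(n, k), hence g is
   admissible, gcd(g l, k) = g, and its sign is (-1)^(lg+1).  It is
   determined by its first g points, which lie in distinct sigma-cycles, and
   every such choice of points comes from a root cycle (build_cycle), so
   there are l^(g-1) (c-1)!/(c-g)! root cycles of each admissible g.
   Therefore R_c = R(A) for |A| = l c satisfies
   c R_c/c! = sum_g g F_g R_(c-g)/(c-g)!, which is the recursion
   c e_c = sum_g g F_g e_(c-g) satisfied by the coefficients of exp(F)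
   (fps_exp_rec).  Finally R(setT) = re_k - ro_k. *)

Section PermPowers.
Local Open Scope group_scope.
Variable T : finType.
Implicit Types (s t u : {perm T}) (x y z : T) (S : {set T}).

Lemma permXS s i z : (s ^+ i.+1) z = s ((s ^+ i) z).
Proof. by rewrite expgSr permM. Qed.

Lemma permXSl s i z : (s ^+ i.+1) z = (s ^+ i) (s z).
Proof. by rewrite expgS permM. Qed.

Lemma permXD s a b z : (s ^+ (a + b)) z = (s ^+ b) ((s ^+ a) z).
Proof. by rewrite expgD permM. Qed.

Lemma permX_eqE s x i j :
  ((s ^+ i) x == (s ^+ j) x) = (i == j %[mod #|porbit s x|]).
Proof.
set n := #|porbit s x|.
have reduce m : (s ^+ m) x = (s ^+ (m %% n)) x.
  have period : (s ^+ n) x = x by rewrite permX /n iter_porbit.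
  by rewrite {1}(divn_eq m n) permXD mulnC expgM (permX_fix _ period).
have n_gt0 : 0 < n by rewrite lt0n card_porbit_neq0.
rewrite reduce (reduce j) !permX -!(nth_traject s (ltn_pmod _ n_gt0)).
by rewrite (nth_uniq x) ?size_traject ?ltn_pmod ?uniq_traject_porbit.
Qed.

Lemma permX_fixE s x i : ((s ^+ i) x == x) = (#|porbit s x| %| i).
Proof. by have := permX_eqE s x i 0; rewrite expg0 perm1 mod0n => ->. Qed.

Lemma mem_porbitX s x y i : y \in porbit s x -> (s ^+ i) y \in porbit s x.
Proof. by rewrite -!eq_porbit_mem porbit_perm. Qed.

Lemma porbit_stable s x z : (s z \in porbit s x) = (z \in porbit s x).
Proof.
have -> : s z = (s ^+ 1) z by rewrite expg1.
by rewrite porbit_sym porbit_perm porbit_sym.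
Qed.

Lemma perm_onX S s j : perm_on S s -> perm_on S (s ^+ j).
Proof.
move=> s_on; elim: j => [|j IH]; first by rewrite expg0 perm_on1.
by rewrite expgS perm_onM.
Qed.

Lemma agree_pow (P : pred T) t u :
  (forall z, P z -> P (u z)) -> (forall z, P z -> t z = u z) ->
  forall j z, P z -> (t ^+ j) z = (u ^+ j) z.
Proof.
move=> Pu Etu j z Pz.
suff : (t ^+ j) z = (u ^+ j) z /\ P ((u ^+ j) z) by case.
elim: j => [|j [IHe IHP]]; first by rewrite !expg0 !perm1.
by rewrite !permXS IHe Etu //; split=> //; apply: Pu.
Qed.

Lemma porbit_fix s z : s z = z -> porbit s z = [set z].
Proof.
move=> sz; apply/setP => y; rewrite inE; apply/porbitP/eqP => [[i ->]|->].
  exact: permX_fix.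
by exists 0%N; rewrite expg0 perm1.
Qed.

(* A permutation whose support is one of its orbits is a cycle: its other
   orbits are fixed points. *)
Lemma card_porbits_cycle t x :
  perm_on (porbit t x) t -> #|porbits t| = (#|T| - #|porbit t x|).+1.
Proof.
move=> t_on; set S := porbit t x.
have -> : porbits t = S |: [set [set z] | z in ~: S].
  apply/setP => P; rewrite !inE; apply/imsetP/idP.
    case=> z _ ->; case: (boolP (z \in S)) => zS.
      by rewrite (eqP (_ : porbit t z == S)) ?eqxx // eq_porbit_mem.
    apply/orP; right; apply/imsetP; exists z; first by rewrite inE.
    exact/porbit_fix/(out_perm t_on).
  case/orP => [/eqP ->|/imsetP[z]]; first by exists x.
  rewrite inE => zS ->; exists z => //.
  exact/esym/porbit_fix/(out_perm t_on).
rewrite cardsU1 card_imset; last exact: set1_inj.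
have -> : S \notin [set [set z] | z in ~: S].
  apply/imsetP => -[z]; rewrite inE => zS ES.
  by move: zS; rewrite ES set11.
by rewrite cardsCs setCK add1n.
Qed.

Lemma odd_perm_cycle t x :
  perm_on (porbit t x) t -> odd_perm t = odd (#|porbit t x|).+1.
Proof.
move=> t_on; rewrite /odd_perm (card_porbits_cycle t_on).
have le : #|porbit t x| <= #|T| by rewrite max_card.
by rewrite -{1}(subnK le) oddD /=; case: (odd _); case: (odd _).
Qed.

Definition cycle_at_fun t x z := if z \in porbit t x then t z else z.
Definition cycle_rest_fun t x z := if z \in porbit t x then z else t z.

Lemma cycle_at_inj t x : injective (cycle_at_fun t x).
Proof.
move=> a b; rewrite /cycle_at_fun.
case: ifP => Ha; case: ifP => Hb //; first exact: perm_inj.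
- by move=> E; move: Hb; rewrite -E porbit_stable Ha.
- by move=> E; move: Ha; rewrite E porbit_stable Hb.
Qed.

Lemma cycle_rest_inj t x : injective (cycle_rest_fun t x).
Proof.
move=> a b; rewrite /cycle_rest_fun.
case: ifP => Ha; case: ifP => Hb //; last exact: perm_inj.
- by move=> E; move: Hb; rewrite -porbit_stable -E Ha.
- by move=> E; move: Ha; rewrite -porbit_stable E Hb.
Qed.

Definition cycle_at t x := perm (@cycle_at_inj t x).
Definition cycle_rest t x := perm (@cycle_rest_inj t x).

Lemma cycle_atE t x z : cycle_at t x z = if z \in porbit t x then t z else z.
Proof. by rewrite permE. Qed.

Lemma cycle_restE t x z : cycle_rest t x z = if z \in porbit t x then z else t z.
Proof. by rewrite permE. Qed.

Lemma cycle_atX t x j z :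
  z \in porbit t x -> (cycle_at t x ^+ j) z = (t ^+ j) z.
Proof.
move=> zS; apply: (agree_pow (P := mem (porbit t x))) => //.
- by move=> w; rewrite /= porbit_stable.
- by move=> w /= wS; rewrite cycle_atE wS.
Qed.

Lemma cycle_restX t x j z :
  z \notin porbit t x -> (cycle_rest t x ^+ j) z = (t ^+ j) z.
Proof.
move=> zS; apply: (agree_pow (P := [pred w | w \notin porbit t x])) => //.
- by move=> w; rewrite /= porbit_stable.
- by move=> w /= wS; rewrite cycle_restE (negbTE wS).
Qed.

Lemma porbit_cycle_at t x : porbit (cycle_at t x) x = porbit t x.
Proof.
apply/setP => z; apply/porbitP/porbitP => -[j ->]; exists j;
  by rewrite cycle_atX ?porbit_id.
Qed.

Lemma cycle_at_on t x : perm_on (porbit t x) (cycle_at t x).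
Proof.
by apply/subsetP => z; rewrite inE cycle_atE; case: ifP => // _; rewrite eqxx.
Qed.

Lemma cycle_rest_on S t x :
  perm_on S t -> perm_on (S :\: porbit t x) (cycle_rest t x).
Proof.
move=> t_on; apply/subsetP => z; rewrite !inE cycle_restE.
case: ifP => [_|zS moved]; first by rewrite eqxx.
by rewrite (subsetP t_on) // inE.
Qed.

Lemma cycle_atM t x : cycle_at t x * cycle_rest t x = t.
Proof.
apply/permP => z; rewrite permM cycle_atE cycle_restE.
by case: (boolP (z \in porbit t x)) => zS; rewrite ?porbit_stable ?zS ?(negbTE zS).
Qed.

End PermPowers.

Section Roots.
Local Open Scope group_scope.
Variables (T : finType) (sigma : {perm T}) (k : nat).
Implicit Types (t : {perm T}) (x z : T) (A : {set T}).

Definition roots_on A :=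
  [set t : {perm T} | perm_on A t && [forall z in A, (t ^+ k) z == sigma z]].

Definition root_cycles A x :=
  [set t : {perm T} | [&& perm_on (porbit t x) t, porbit t x \subset A &
     [forall z in porbit t x, (t ^+ k) z == sigma z]]].

Definition sgn t : rat := ((-1) ^+ odd_perm t)%R.

Definition signed_roots A : rat := (\sum_(t in roots_on A) sgn t)%R.

Lemma roots_onP A t :
  reflect (perm_on A t /\ forall z, z \in A -> (t ^+ k) z = sigma z)
          (t \in roots_on A).
Proof.
rewrite inE; apply: (iffP andP) => [[H /forall_inP F]|[H F]]; split => //.
  by move=> z /F /eqP.
by apply/forall_inP => z /F ->.
Qed.

Lemma root_cyclesP A x t :
  reflect [/\ perm_on (porbit t x) t, porbit t x \subset A &
             forall z, z \in porbit t x -> (t ^+ k) z = sigma z]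
          (t \in root_cycles A x).
Proof.
rewrite inE; apply: (iffP and3P) => [[H1 H2 /forall_inP F]|[H1 H2 F]].
  by split => // z /F /eqP.
by split => //; apply/forall_inP => z /F ->.
Qed.

Section Glue.
Variables (A : {set T}) (x : T) (t1 t2 : {perm T}).
Hypotheses (t1_cyc : t1 \in root_cycles A x)
           (t2_root : t2 \in roots_on (A :\: porbit t1 x)).
Let S := porbit t1 x.

Lemma t1_on : perm_on S t1.
Proof. by case/root_cyclesP: t1_cyc. Qed.

Lemma t2_on : perm_on (A :\: S) t2.
Proof. by case/roots_onP: t2_root. Qed.

Lemma glue_in z : z \in S -> (t1 * t2) z = t1 z.
Proof.
by move=> zS; rewrite permM (out_perm t2_on) // inE porbit_stable zS.
Qed.

Lemma glue_out z : z \notin S -> (t1 * t2) z = t2 z.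
Proof. by move=> zS; rewrite permM (out_perm t1_on zS). Qed.

Lemma glue_inX j z : z \in S -> ((t1 * t2) ^+ j) z = (t1 ^+ j) z.
Proof.
apply: (agree_pow (P := mem S)) => [w|w]; first by rewrite /= porbit_stable.
exact: glue_in.
Qed.

Lemma glue_outX j z : z \notin S -> ((t1 * t2) ^+ j) z = (t2 ^+ j) z.
Proof.
apply: (agree_pow (P := [pred w | w \notin S])) => [w /= wS|w]; last first.
  exact: glue_out.
apply: contra wS => t2wS; have fix_t2w : t2 (t2 w) = t2 w.
  by rewrite (out_perm t2_on) // inE t2wS.
by rewrite -(perm_inj fix_t2w).
Qed.

Lemma porbit_glue : porbit (t1 * t2) x = S.
Proof.
apply/setP => z; apply/porbitP/porbitP => -[j ->]; exists j;
  by rewrite glue_inX // porbit_id.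
Qed.

Lemma glue_root : t1 * t2 \in roots_on A.
Proof.
have [_ SA t1_root] := root_cyclesP _ _ _ t1_cyc.
have [_ t2_root'] := roots_onP _ _ t2_root.
apply/roots_onP; split => [|z zA].
  apply/subsetP => z; rewrite inE.
  case: (boolP (z \in S)) => [zS _|zS]; first exact: (subsetP SA).
  rewrite glue_out // => moved.
  by have := subsetP t2_on z; rewrite !inE => /(_ moved) /andP[].
case: (boolP (z \in S)) => zS; first by rewrite glue_inX // t1_root.
by rewrite glue_outX // t2_root' // inE zS.
Qed.

End Glue.

Lemma split_root A x t : t \in roots_on A -> x \in A ->
  cycle_at t x \in root_cycles A x /\
  cycle_rest t x \in roots_on (A :\: porbit (cycle_at t x) x).
Proof.
move=> /roots_onP[t_on t_root] xA; rewrite porbit_cycle_at.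
have SA : porbit t x \subset A.
  by apply/subsetP => z /porbitP[j ->]; rewrite (perm_closed _ (perm_onX j t_on)).
split.
  apply/root_cyclesP; rewrite porbit_cycle_at; split=> [||z zS].
  - exact: cycle_at_on.
  - exact: SA.
  - by rewrite cycle_atX // t_root // (subsetP SA).
apply/roots_onP; split=> [|z]; first exact: cycle_rest_on.
by rewrite inE => /andP[zS zA]; rewrite cycle_restX // t_root.
Qed.

Lemma signed_roots_decomp A x : x \in A ->
  signed_roots A =
  (\sum_(t1 in root_cycles A x) sgn t1 * signed_roots (A :\: porbit t1 x))%R.
Proof.
move=> xA; rewrite /signed_roots; symmetry.
under eq_bigr => t1 _ do rewrite big_distrr /=.
rewrite pair_big_dep /=.
set D := [set p : {perm T} * {perm T} |
           (p.1 \in root_cycles A x) && (p.2 \in roots_on (A :\: porbit p.1 x))].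
have inD p : (p \in D) =
    (p.1 \in root_cycles A x) && (p.2 \in roots_on (A :\: porbit p.1 x)).
  by rewrite /D in_set.
rewrite (eq_bigl (mem D)) => [|p]; last by rewrite /= inD.
have sgnM s t : (sgn s * sgn t = sgn (s * t))%R.
  by rewrite /sgn odd_permM signr_addb.
under eq_bigr => p _ do rewrite sgnM.
have glue_inj : {in D &, injective (fun p : {perm T} * {perm T} => p.1 * p.2)}.
  move=> [a1 a2] [b1 b2]; rewrite !inD /= => /andP[ha1 ha2] /andP[hb1 hb2] E.
  have ES : porbit a1 x = porbit b1 x.
    by rewrite -(porbit_glue ha2) E (porbit_glue hb2).
  have e1 : a1 = b1.
    apply/permP => z; case: (boolP (z \in porbit a1 x)) => zS.
      by rewrite -(glue_in ha2 zS) E (glue_in hb2) // -ES.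
    by rewrite (out_perm (t1_on ha1) zS) (out_perm (t1_on hb1)) // -ES.
  subst b1; congr pair; apply/permP => z.
  case: (boolP (z \in porbit a1 x)) => zS; last first.
    by rewrite -(glue_out a2 ha1 zS) E (glue_out b2 hb1 zS).
  by rewrite (out_perm (t2_on ha2)) ?(out_perm (t2_on hb2)) // inE zS.
rewrite -(big_imset _ glue_inj) /=; apply: eq_bigl => t; apply/imsetP/idP.
  by case=> -[a b]; rewrite inD /= => /andP[ha hb] ->; exact: glue_root ha hb.
move=> tR; have [cyc rest] := split_root tR xA.
by exists (cycle_at t x, cycle_rest t x); rewrite ?inD ?cyc // cycle_atM.
Qed.

End Roots.

Section RootCycleShape.
Variables (T : finType) (sigma : {perm T}) (k l : nat).
Hypotheses (k_gt0 : 0 < k) (sigma_cycles : forall x, #|porbit sigma x| = l).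

Lemma sigmaX_eq a b w :
  (sigma ^+ a)%g w = (sigma ^+ b)%g w <-> a = b %[mod l].
Proof.
have := permX_eqE sigma w a b; rewrite sigma_cycles => E.
by split => [/eqP|ab]; [rewrite E => /eqP | apply/eqP; rewrite E ab].
Qed.

Section OneCycle.
Variables (A : {set T}) (x : T) (t : {perm T}).
Hypothesis t_cyc : t \in root_cycles sigma k A x.
Let n := #|porbit t x|.
Let g := gcdn n k.

Lemma sigmaX_cycle j y : y \in porbit t x -> (sigma ^+ j)%g y = (t ^+ (k * j))%g y.
Proof.
have [_ _ t_root] := root_cyclesP _ _ _ _ _ t_cyc.
move=> yS; elim: j => [|j IH]; first by rewrite muln0 !expg0 !perm1.
by rewrite permXS IH -t_root ?mem_porbitX // -permXD mulnSr.
Qed.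

(* The cycle has length l g where g = gcd(n, k): comparing periods, l | j
   iff n | k j, i.e. l = n / gcd(n, k). *)
Lemma card_root_cycle : n = l * g.
Proof.
have period j : (l %| j) = (n %| k * j).
  rewrite -(sigma_cycles x) -(permX_fixE sigma x j) sigmaX_cycle ?porbit_id //.
  by rewrite permX_fixE.
have n_gt0 : 0 < n by rewrite lt0n card_porbit_neq0.
have g_gt0 : 0 < g by rewrite gcdn_gt0 n_gt0.
have En : n = g * (n %/ g) by rewrite mulnC divnK ?dvdn_gcdl.
have Ek : k = g * (k %/ g) by rewrite mulnC divnK ?dvdn_gcdr.
have coprime_quot : coprime (n %/ g) (k %/ g).
  by rewrite /coprime -(eqn_pmul2l g_gt0) muln_gcdr -En -Ek muln1.
have period' j : (l %| j) = (n %/ g %| j).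
  by rewrite period {1}En {1}Ek -mulnA dvdn_pmul2l // Gauss_dvdr.
have -> : l = n %/ g by apply/eqP; rewrite eqn_dvd period' dvdnn -period' dvdnn.
by rewrite mulnC -En.
Qed.

Lemma root_cycle_admissible : gcdn (g * l) k = g.
Proof. by rewrite mulnC -card_root_cycle. Qed.

Lemma root_cycleX_rec u i : k %/ g * u = 1 %[mod l] -> g <= i ->
  (t ^+ i)%g x = (sigma ^+ u)%g ((t ^+ (i - g))%g x).
Proof.
move=> hu gi.
have tg : (t ^+ g)%g x = (sigma ^+ u)%g x.
  rewrite sigmaX_cycle ?porbit_id //; apply/eqP; rewrite permX_eqE.
  rewrite -/n card_root_cycle mulnC.
  have Ek : k = g * (k %/ g) by rewrite mulnC divnK // dvdn_gcdr.
  by rewrite {1}Ek -mulnA -!muln_modr hu muln_modr muln1.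
rewrite sigmaX_cycle ?mem_porbitX ?porbit_id // -permXD.
rewrite -{1}(subnK gi) addnC permXD tg sigmaX_cycle ?porbit_id //.
by rewrite -permXD addnC.
Qed.

Lemma root_cycle_porbits_uniq i j : i < g -> j < g ->
  porbit sigma ((t ^+ i)%g x) = porbit sigma ((t ^+ j)%g x) -> i = j.
Proof.
move=> ig jg E.
have : (t ^+ j)%g x \in porbit sigma ((t ^+ i)%g x) by rewrite E porbit_id.
case/porbitP => a; rewrite sigmaX_cycle ?mem_porbitX ?porbit_id // -permXD.
move/eqP; rewrite permX_eqE -/n => /eqP Em.
have g_dvd_n : g %| n by rewrite card_root_cycle dvdn_mull.
have : j = i + k * a %[mod g] by rewrite -(modn_dvdm _ g_dvd_n) Em modn_dvdm.
rewrite -(divnK (dvdn_gcdr n k)) mulnAC addnC modnMDl.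
by rewrite !modn_small.
Qed.

End OneCycle.

Lemma admissible_inverse g : 0 < g -> gcdn (g * l) k = g ->
  exists u, k %/ g * u = 1 %[mod l].
Proof.
move=> g_gt0 hg.
have g_dvd_k : g %| k by rewrite -{1}hg dvdn_gcdr.
have Ek : k = g * (k %/ g) by rewrite mulnC divnK.
have k'_gt0 : 0 < k %/ g by rewrite divn_gt0 // dvdn_leq.
have cop : coprime (k %/ g) l.
  by rewrite /coprime gcdnC -(eqn_pmul2l g_gt0) muln_gcdr -Ek hg muln1.
have [[a b] /= hab] := coprimeP _ k'_gt0 cop.
exists a; rewrite mulnC.
have lt : b * l < a * (k %/ g) by rewrite -subn_gt0 hab.
by rewrite -(subnK (ltnW lt)) hab addnC modnMDl.
Qed.

Lemma root_cycle_determined A x t t' :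
  t \in root_cycles sigma k A x -> t' \in root_cycles sigma k A x ->
  gcdn #|porbit t x| k = gcdn #|porbit t' x| k ->
  (forall i, i < gcdn #|porbit t x| k -> (t ^+ i)%g x = (t' ^+ i)%g x) ->
  t = t'.
Proof.
move=> t_cyc t'_cyc Eg E; set g := gcdn #|porbit t x| k.
have g_gt0 : 0 < g by rewrite gcdn_gt0 k_gt0 orbT.
have [u hu] := admissible_inverse g_gt0 (root_cycle_admissible t_cyc).
have hu' : k %/ gcdn #|porbit t' x| k * u = 1 %[mod l] by rewrite -Eg.
have Eall i : (t ^+ i)%g x = (t' ^+ i)%g x.
  elim/ltn_ind: i => i IH; case: (ltnP i g) => gi; first exact: E.
  rewrite (root_cycleX_rec t_cyc hu gi) (root_cycleX_rec t'_cyc hu') -?Eg //.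
  by rewrite IH // -/g; lia.
have ES : porbit t x = porbit t' x.
  by apply/setP => z; apply/porbitP/porbitP => -[i ->]; exists i.
have [t_on _ _] := root_cyclesP _ _ _ _ _ t_cyc.
have [t'_on _ _] := root_cyclesP _ _ _ _ _ t'_cyc.
apply/permP => z; case: (boolP (z \in porbit t x)) => zS.
  by case/porbitP: zS => i ->; rewrite -permXS Eall permXS -(Eall i).
by rewrite (out_perm t_on zS) (out_perm t'_on) // -ES.
Qed.

End RootCycleShape.

Lemma next_nth_uniq (T : eqType) (p : seq T) x0 i : uniq p -> i < size p ->
  next p (nth x0 p i) = nth x0 p (i.+1 %% size p).
Proof.
move=> Up ip; rewrite next_nth mem_nth // index_uniq //.
case: p Up ip => [//|y p'] /= Up ip.
case: (ltngtP i.+1 (size p').+1) => h.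
- by rewrite modn_small //= (set_nth_default y x0).
- by move: ip; rewrite ltnS => ip; move: h; rewrite ltnS ltnNge ip.
- by move: h => [->]; rewrite modnn /= nth_default.
Qed.

Definition sigma_stable (T : finType) (sigma : {perm T}) (A : {set T}) :=
  forall z, z \in A -> sigma z \in A.

(* Conversely, given x and g - 1 further points of A in distinct sigma-cycles
   (distinct from that of x), there is a root cycle through x whose first g
   points are these: the cycle visiting sigma^(u q)(y_r) at step q g + r. *)
Section BuildCycle.
Variables (T : finType) (sigma : {perm T}) (k l : nat).
Hypotheses (l_gt0 : 0 < l) (sigma_cycles : forall x, #|porbit sigma x| = l).
Variables (A : {set T}) (x : T) (g u : nat) (y : seq T).
Hypotheses (A_stable : sigma_stable sigma A) (xA : x \in A)
  (g_gt0 : 0 < g) (g_adm : gcdn (g * l) k = g) (hu : k %/ g * u = 1 %[mod l])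
  (y_size : size y = g.-1) (yA : all (mem A) y)
  (y_uniq : uniq (map (porbit sigma) (x :: y))).

Let n := l * g.
Let point i := (sigma ^+ (u * (i %/ g)))%g (nth x (x :: y) (i %% g)).
Let points := mkseq point n.

Lemma point_mod j : point (j %% n) = point j.
Proof.
rewrite /point /n modn_dvdm ?dvdn_mull // divn_modl ?dvdn_mull // mulnK //.
by apply/(sigmaX_eq sigma_cycles); rewrite modnMmr.
Qed.

Lemma point_addk i : point (i + k) = sigma (point i).
Proof.
have g_dvd_k : g %| k by rewrite -g_adm dvdn_gcdr.
rewrite /point -permXS; have -> : (i + k) %% g = i %% g.
  by rewrite -(divnK g_dvd_k) addnC modnMDl.
apply/(sigmaX_eq sigma_cycles).
have hu' : u * (k %/ g) = 1 %[mod l] by rewrite mulnC hu.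
by rewrite divnDr // mulnDr -modnDmr hu' modnDmr addn1.
Qed.

(* The n points are pairwise distinct: the residue of i mod g selects the
   sigma-cycle, and the quotient its position along that cycle. *)
Lemma point_inj : {in gtn n &, injective point}.
Proof.
move=> i j; rewrite !inE /= => hi hj E.
have ig : i %% g < size (x :: y) by rewrite /= y_size prednK // ltn_pmod.
have jg : j %% g < size (x :: y) by rewrite /= y_size prednK // ltn_pmod.
have Er : i %% g = j %% g.
  have : porbit sigma (point i) = porbit sigma (point j) by rewrite E.
  rewrite /point !porbit_perm => Eo.
  apply/eqP; rewrite -(nth_uniq (porbit sigma x) _ _ y_uniq) ?size_map //.
  by rewrite !(nth_map x) // Eo.
move: E; rewrite /point Er => /(sigmaX_eq sigma_cycles) Eq.
have Eq2 : i %/ g = j %/ g %[mod l].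
  rewrite -[i %/ g]mul1n -[j %/ g]mul1n -!(modnMml 1) -hu !modnMml -!mulnA.
  by rewrite -modnMmr Eq modnMmr.
have il : i %/ g < l by rewrite ltn_divLR.
have jl : j %/ g < l by rewrite ltn_divLR.
rewrite !modn_small // in Eq2.
by rewrite (divn_eq i g) (divn_eq j g) Eq2 Er.
Qed.

Lemma points_uniq : uniq points.
Proof. exact/mkseq_uniqP/point_inj. Qed.

Lemma n_gt0 : 0 < n.
Proof. by rewrite muln_gt0 l_gt0 g_gt0. Qed.

Definition build_cycle := perm (can_inj (prev_next points_uniq)).

Lemma build_cycleX i : (build_cycle ^+ i)%g x = point (i %% n).
Proof.
have size_points : size points = n by rewrite size_mkseq.
elim: i => [|i IH].
  by rewrite expg0 perm1 mod0n /point div0n mod0n muln0 expg0 perm1.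
rewrite permXS IH permE -(nth_mkseq x point (ltn_pmod _ n_gt0)).
rewrite next_nth_uniq ?points_uniq ?size_points ?ltn_pmod ?n_gt0 //.
by rewrite nth_mkseq ?ltn_pmod ?n_gt0 // -addn1 modnDml addn1.
Qed.

Lemma porbit_build_cycle : porbit build_cycle x = [set z | z \in points].
Proof.
have size_points : size points = n by rewrite size_mkseq.
apply/setP => z; rewrite inE; apply/porbitP/idP => [[i ->]|zZ].
  rewrite build_cycleX -(nth_mkseq x point (ltn_pmod _ n_gt0)).
  by rewrite mem_nth ?size_points ?ltn_pmod ?n_gt0.
have iz : index z points < n by rewrite -size_points index_mem.
exists (index z points); rewrite build_cycleX modn_small //.
by rewrite -(nth_mkseq x point iz) nth_index.
Qed.

Lemma gcd_build_cycle : gcdn #|porbit build_cycle x| k = g.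
Proof.
have -> : #|porbit build_cycle x| = n.
  rewrite porbit_build_cycle -[n](size_mkseq point) -(card_uniqP points_uniq).
  by apply: eq_card => z; rewrite inE.
by rewrite /n mulnC g_adm.
Qed.

Lemma build_cycle_root : build_cycle \in root_cycles sigma k A x.
Proof.
have sigmaX_A a z : z \in A -> (sigma ^+ a)%g z \in A.
  by elim: a => [|a IH] zA; rewrite ?expg0 ?perm1 // permXS A_stable // IH.
apply/root_cyclesP; split.
- apply/subsetP => z; rewrite inE permE porbit_build_cycle inE.
  by apply: contraR => zZ; rewrite next_nth (negbTE zZ).
- apply/subsetP => z; rewrite porbit_build_cycle inE => /mapP[i _ ->].
  apply: sigmaX_A; case: (i %% g) => [|r] //=.
  case: (ltnP r (size y)) => hr; first by apply: (allP yA); rewrite mem_nth.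
  by rewrite nth_default.
- move=> z /porbitP[i ->].
  by rewrite -permXD !build_cycleX !point_mod point_addk.
Qed.

Lemma build_cycle_start r : r < g -> (build_cycle ^+ r)%g x = nth x (x :: y) r.
Proof.
move=> rg; rewrite build_cycleX modn_small ?/n; last first.
  by rewrite (leq_trans rg) // leq_pmull.
by rewrite /point divn_small // modn_small // muln0 expg0 perm1.
Qed.

End BuildCycle.

Section CountRootCycles.
Variables (T : finType) (sigma : {perm T}) (k l : nat).
Hypotheses (k_gt0 : 0 < k) (l_gt0 : 0 < l)
  (sigma_cycles : forall x, #|porbit sigma x| = l).
Variables (A : {set T}) (x : T).
Hypotheses (A_stable : sigma_stable sigma A) (xA : x \in A).

Definition orbit_reps m :=
  [set y : m.-tuple T | all (mem A) y && uniq (map (porbit sigma) (x :: y))].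

Definition first_points g (t : {perm T}) : (g.-1).-tuple T :=
  [tuple (t ^+ i.+1)%g x | i < g.-1].

Definition root_cycles_gcd g :=
  [set t in root_cycles sigma k A x | gcdn #|porbit t x| k == g].

Lemma root_cycles_gcdE g t : (t \in root_cycles_gcd g) =
  (t \in root_cycles sigma k A x) && (gcdn #|porbit t x| k == g).
Proof. by rewrite in_set. Qed.

Lemma orbit_repsE m (y : m.-tuple T) : (y \in orbit_reps m) =
  all (mem A) y && uniq (map (porbit sigma) (x :: y)).
Proof. by rewrite in_set. Qed.

Lemma nth_first_points g t j : j < g.-1 -> nth x (first_points g t) j = (t ^+ j.+1)%g x.
Proof. by move=> hj; rewrite -[j]/(nat_of_ord (Ordinal hj)) nth_mktuple. Qed.

Lemma nth_x_first_points g t r : 0 < g -> r < g ->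
  nth x (x :: first_points g t) r = (t ^+ r)%g x.
Proof.
move=> g_gt0; case: r => [|j] hr /=; first by rewrite expg0 perm1.
by rewrite nth_first_points // -ltnS prednK.
Qed.

Lemma first_points_inj g : {in root_cycles_gcd g &, injective (first_points g)}.
Proof.
move=> t t'; rewrite !root_cycles_gcdE => /andP[t_cyc /eqP gt] /andP[t'_cyc /eqP gt'] E.
have Eg : gcdn #|porbit t x| k = gcdn #|porbit t' x| k by rewrite gt gt'.
apply: (root_cycle_determined k_gt0 sigma_cycles t_cyc t'_cyc Eg).
move=> [|j]; first by rewrite !expg0.
rewrite gt => hj; have hj' : j < g.-1 by lia.
by rewrite -(nth_first_points t hj') -(nth_first_points t' hj') E.
Qed.

Lemma first_points_reps g t :
  t \in root_cycles_gcd g -> first_points g t \in orbit_reps g.-1.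
Proof.
rewrite root_cycles_gcdE => /andP[t_cyc /eqP gt].
have g_gt0 : 0 < g by rewrite -gt gcdn_gt0 k_gt0 orbT.
rewrite orbit_repsE; apply/andP; split.
  apply/(all_nthP x) => j; rewrite size_tuple => hj.
  rewrite nth_first_points //; have [_ SA _] := root_cyclesP _ _ _ _ _ t_cyc.
  exact/(subsetP SA)/mem_porbit.
have sz : size (x :: first_points g t) = g.
  by rewrite /= size_tuple card_ord prednK.
apply/(uniqP (porbit sigma x)) => i j; rewrite !inE size_map sz => hi hj.
rewrite !(nth_map x) ?sz // !nth_x_first_points //.
by apply: (root_cycle_porbits_uniq sigma_cycles t_cyc); rewrite gt.
Qed.

(* Root cycles with gcd g correspond to orbit representatives: first_points
   is injective, and build_cycle provides preimages. *)
Lemma card_root_cycles_gcd g : 0 < g -> gcdn (g * l) k = g ->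
  #|root_cycles_gcd g| = #|orbit_reps g.-1|.
Proof.
move=> g_gt0 g_adm; rewrite -(card_in_imset (@first_points_inj g)).
apply: eq_card => y; apply/imsetP/idP => [[t t_cyc ->]|].
  exact: first_points_reps.
rewrite orbit_repsE => /andP[yA y_uniq].
have [u hu] := admissible_inverse k_gt0 g_gt0 g_adm.
pose t := build_cycle sigma_cycles g_gt0 hu (size_tuple y) y_uniq.
exists t.
  rewrite root_cycles_gcdE (build_cycle_root l_gt0) //=.
  by rewrite (gcd_build_cycle l_gt0).
apply: eq_from_tnth => i; rewrite tnth_mktuple build_cycle_start //.
  by rewrite (tnth_nth x).
by have := ltn_ord i; lia.
Qed.

Definition cycles_union (s : seq T) :=
  [set z | porbit sigma z \in map (porbit sigma) s].

Lemma card_cycles_union s :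
  uniq (map (porbit sigma) s) -> #|cycles_union s| = l * size s.
Proof.
elim: s => [|a s IH] /=.
  move=> _; rewrite muln0; apply/eqP; rewrite cards_eq0.
  by apply/eqP/setP => z; rewrite !inE.
case/andP => a_new s_uniq.
have -> : cycles_union (a :: s) = porbit sigma a :|: cycles_union s.
  by apply/setP => z; rewrite !inE eq_porbit_mem.
rewrite cardsU IH // sigma_cycles.
have -> : porbit sigma a :&: cycles_union s = set0.
  apply/setP => z; rewrite !inE; apply/negP => /andP[za zs].
  have /eqP Eza : porbit sigma z == porbit sigma a by rewrite eq_porbit_mem.
  by move: a_new; rewrite -Eza zs.
by rewrite cards0 subn0 mulnS.
Qed.

Lemma cycles_union_sub s : all (mem A) s -> cycles_union s \subset A.
Proof.
move=> sA; apply/subsetP => z; rewrite inE => /mapP[a aS Ez].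
have : z \in porbit sigma a by rewrite -Ez porbit_id.
case/porbitP => i ->; have : a \in A := allP sA a aS.
by elim: i => [|i IH] aA; rewrite ?expg0 ?perm1 // permXS A_stable // IH.
Qed.

Lemma orbit_repsS m : orbit_reps m.+1 =
  [set cons_tuple p.2 p.1 | p in [set p : m.-tuple T * T |
     (p.1 \in orbit_reps m) && (p.2 \in A :\: cycles_union (x :: p.1))]].
Proof.
apply/setP => w; rewrite orbit_repsE; apply/idP/imsetP.
  case/tupleP: w => z y /andP[wA wU]; exists (y, z); last exact: val_inj.
  move: wA wU => /= /andP[zA yA].
  rewrite !inE negb_or => /andP[/andP[nxz nxy] /andP[nzy yU]].
  rewrite /= yA zA nxy yU /= andbT; apply/negP => /orP[/eqP E|H].
    by move: nxz; rewrite E eqxx.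
  by move/negP: nzy.
case=> -[y z]; rewrite inE /= orbit_repsE !inE.
move=> /andP[/andP[yA yU] /andP[nz zA]] ->.
move: nz yU; rewrite /= !inE negb_or => /andP[nzx nzy] /andP[nxy yU].
by rewrite zA yA nzy yU negb_or eq_sym nzx nxy.
Qed.

(* The i-th representative avoids the l (i + 1) points already covered. *)
Lemma card_orbit_reps m : #|orbit_reps m| = \prod_(i < m) (#|A| - l * i.+1).
Proof.
elim: m => [|m IH].
  rewrite big_ord0 -(expn0 #|T|) -card_tuple -cardsT; apply: eq_card => y.
  by rewrite orbit_repsE tuple0 inE.
rewrite big_ord_recr -IH orbit_repsS card_in_imset; last first.
  by move=> [y z] [y' z'] _ _ /(congr1 val) /= [-> /val_inj ->].
rewrite -sum1_card (eq_bigl _ _ (fun p => in_set _ p)) /=.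
rewrite -(pair_big_dep (fun y => y \in orbit_reps m)
           (fun y z => z \in A :\: cycles_union (x :: y)) (fun _ _ => 1)) /=.
rewrite -sum_nat_const; apply: eq_bigr => y.
rewrite orbit_repsE sum1_card => /andP[yA yU].
by rewrite cardsDS ?cycles_union_sub /= ?xA ?yA // card_cycles_union // size_tuple.
Qed.

End CountRootCycles.

Section ExpRecursion.
Local Open Scope ring_scope.

Lemma fps_pow_coef (f : fps) N m n : (n <= N)%N ->
  fps_pow f m n = ((\poly_(i < N.+1) f i) ^+ m)`_n.
Proof.
elim: m n => [|m IH] n hn /=.
  by rewrite expr0 coef1 /fps_one; case: (n == 0%N).
rewrite exprS coefM /fps_mul; apply: eq_bigr => i _.
rewrite coef_poly IH ?(leq_trans (leq_subr _ _) hn) //.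
by have -> : (i < N.+1)%N by rewrite ltnS (leq_trans _ hn) // -ltnS.
Qed.

Lemma fps_pow_small (f : fps) m n : f 0%N = 0 -> (n < m)%N -> fps_pow f m n = 0.
Proof.
move=> f0; elim: m n => [|m IH] n // hn /=.
rewrite /fps_mul big1 // => -[[|i] hi] _ /=; first by rewrite f0 mul0r.
by rewrite IH ?mulr0 //; lia.
Qed.

Lemma fps_exp_ext (f : fps) n M : f 0%N = 0 -> (n <= M)%N ->
  fps_exp f n = \sum_(m < M.+1) fps_pow f m n / (m`!)%:R.
Proof.
move=> f0 hM; have hM' : (n.+1 <= M.+1)%N by [].
rewrite /fps_exp (big_ord_widen _ (fun m => fps_pow f m n / (m`!)%:R) hM').
rewrite [RHS](bigID (fun m : 'I_M.+1 => (m < n.+1)%N)) /=.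
rewrite [X in _ = _ + X]big1 ?addr0 // => i; rewrite -leqNgt => hi.
by rewrite fps_pow_small ?mul0r.
Qed.

(* The derivative identity exp(f)' = f' exp(f), coefficientwise:
   c e_c = sum_g g f_g e_(c-g).  It is checked on the polynomial truncations,
   where formal derivation of sum_m p^m/m! is available. *)
Lemma fps_exp_rec (f : fps) c : f 0%N = 0 ->
  c%:R * fps_exp f c = \sum_(g < c.+1) (g%:R * f g) * fps_exp f (c - g)%N.
Proof.
move=> f0; case: c => [|N]; first by rewrite big_ord1 !mul0r.
set c := N.+1; set p := \poly_(i < c.+1) f i.
set q := \sum_(m < c.+1) (((m`!)%:R)^-1 *: p ^+ m).
set q' := \sum_(i < c) (((i`!)%:R)^-1 *: p ^+ i).
have Eq j : (j <= c)%N -> fps_exp f j = q`_j.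
  move=> hj; rewrite (fps_exp_ext f0 hj) /q coef_sum; apply: eq_bigr => m _.
  by rewrite coefZ (fps_pow_coef _ _ hj) mulrC.
have Eq' j : (j <= N)%N -> fps_exp f j = q'`_j.
  move=> hj; rewrite (fps_exp_ext f0 hj) /q' coef_sum; apply: eq_bigr => m _.
  by rewrite coefZ (fps_pow_coef _ _ (leq_trans hj (leqnSn N))) mulrC.
have Dq : q^`() = p^`() * q'.
  rewrite /q raddf_sum big_ord_recl /= derivZ deriv_exp mulr0n scaler0 add0r.
  rewrite /q' big_distrr /=; apply: eq_bigr => i _.
  rewrite derivZ deriv_exp /= -scalerAr -scaler_nat scalerA; congr (_ *: _).
  by rewrite factS natrM invfM mulrC mulrA mulfV ?mul1r // pnatr_eq0.
have Lq : c%:R * q`_c = (q^`())`_N by rewrite coef_deriv mulr_natl.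
rewrite Eq // Lq Dq coefM.
rewrite [RHS]big_ord_recl /= mul0r mul0r add0r; apply: eq_bigr => i _.
rewrite coef_deriv coef_poly ltnS (ltn_ord i) -Eq' ?leq_subr //.
by rewrite mulr_natl /bump /= add1n subSS.
Qed.

End ExpRecursion.

Section SignedCount.
Variables (T : finType) (sigma : {perm T}) (k l : nat).
Hypotheses (k_gt0 : 0 < k) (l_gt0 : 0 < l)
  (sigma_cycles : forall x, #|porbit sigma x| = l).
Implicit Types (A : {set T}) (x : T) (t : {perm T}).

Lemma signed_roots_set0 : signed_roots sigma k set0 = 1%R.
Proof.
rewrite /signed_roots; have -> : roots_on sigma k set0 = [set 1%g].
  apply/setP => t; rewrite [RHS]inE; apply/roots_onP/eqP => [[t_on _]|->].
    by apply: (perm_on_id t_on); rewrite cards0.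
  by split => [|z]; [exact: perm_on1 | rewrite inE].
by rewrite big_set1 /sgn odd_perm1 expr0.
Qed.

Lemma sgn_root_cycle A x t : t \in root_cycles sigma k A x ->
  sgn t = ((-1) ^+ (l * gcdn #|porbit t x| k).+1)%R.
Proof.
move=> t_cyc; have [t_on _ _] := root_cyclesP _ _ _ _ _ t_cyc.
by rewrite /sgn (odd_perm_cycle t_on) signr_odd {1}(card_root_cycle sigma_cycles t_cyc).
Qed.

Lemma root_cycle_gcd_le A x t c : t \in root_cycles sigma k A x ->
  #|A| = l * c -> gcdn #|porbit t x| k <= c.
Proof.
move=> t_cyc cA; have [_ SA _] := root_cyclesP _ _ _ _ _ t_cyc.
have := subset_leq_card SA.
by rewrite cA {1}(card_root_cycle sigma_cycles t_cyc) leq_pmul2l.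
Qed.

(* Removing a root cycle with gcd g leaves a sigma-stable set of l (c - g)
   points: the cycle is a union of sigma-cycles. *)
Lemma root_cycle_rest A x t c : sigma_stable sigma A -> #|A| = l * c ->
  t \in root_cycles sigma k A x ->
  sigma_stable sigma (A :\: porbit t x) /\
  #|A :\: porbit t x| = l * (c - gcdn #|porbit t x| k).
Proof.
move=> A_stable cA t_cyc; have [_ SA _] := root_cyclesP _ _ _ _ _ t_cyc.
split; last by rewrite cardsDS // cA {1}(card_root_cycle sigma_cycles t_cyc) mulnBr.
move=> z; rewrite !inE => /andP[zS zA]; rewrite A_stable // andbT.
apply: contra zS => szS.
have sigma_l : (sigma ^+ l)%g z = z by apply/eqP; rewrite permX_fixE sigma_cycles.
have := mem_porbitX (k * l.-1) szS.
by rewrite -(sigmaX_cycle t_cyc) // -permXSl prednK // sigma_l.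
Qed.

Lemma card_root_cycles_gcd_formula A x c g : sigma_stable sigma A -> x \in A ->
  #|A| = l * c ->
  #|root_cycles_gcd sigma k A x g| =
    (if (0 < g) && Gk k l g then l ^ g.-1 * (c.-1) ^_ g.-1 else 0).
Proof.
move=> A_stable xA cA; rewrite /Gk.
case: ifP => [/andP[g_gt0 /eqP g_adm]|not_adm].
  rewrite (card_root_cycles_gcd k_gt0 l_gt0 sigma_cycles A_stable xA g_gt0 g_adm).
  rewrite (card_orbit_reps sigma_cycles A_stable xA) cA ffact_prod.
  have -> : l ^ g.-1 = \prod_(i < g.-1) l by rewrite prod_nat_const card_ord.
  rewrite -big_split /=.
  by apply: eq_bigr => i _; rewrite -mulnBr; congr (_ * _); lia.
apply/eqP; rewrite cards_eq0; apply/eqP/setP => t; rewrite in_set0 root_cycles_gcdE.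
apply/negP => /andP[t_cyc /eqP gt]; move: not_adm.
by rewrite -gt gcdn_gt0 k_gt0 orbT (root_cycle_admissible sigma_cycles t_cyc) eqxx.
Qed.

Lemma sum_root_cycles_by_gcd A x c (h : nat -> rat) : #|A| = l * c ->
  (\sum_(t in root_cycles sigma k A x) h (gcdn #|porbit t x| k) =
   \sum_(g < c.+1) #|root_cycles_gcd sigma k A x g|%:R * h g)%R.
Proof.
move=> cA.
rewrite (partition_big (fun t => inord (gcdn #|porbit t x| k) : 'I_c.+1) predT) //=.
apply: eq_bigr => g _; rewrite mulr_natl -sumr_const.
rewrite (eq_bigl (fun t => t \in root_cycles_gcd sigma k A x g)) => [|t]; last first.
  rewrite root_cycles_gcdE; case: (boolP (t \in _)) => //= t_cyc.
  by rewrite -val_eqE /= inordK // ltnS (root_cycle_gcd_le t_cyc cA).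
by apply: eq_bigr => t; rewrite root_cycles_gcdE => /andP[_ /eqP ->].
Qed.

(* Contribution of the admissible g to the recursion, after clearing
   denominators: l^(g-1) (c-1)!/(c-g)! (-1)^(lg+1) = (c-1)! g F_g. *)
Lemma count_term c g (e : rat) : 0 < c -> g <= c ->
  ((if (0 < g) && Gk k l g then l ^ g.-1 * (c.-1) ^_ g.-1 else 0)%N%:R *
     ((-1) ^+ (l * g).+1 * ((c - g)`!%:R * e)) =
   (c.-1)`!%:R * ((g%:R * Fseries k l g) * e))%R.
Proof.
move=> c_gt0 gc; rewrite /Fseries.
case: (posnP g) => [->|g_gt0] /=; first by rewrite !mul0r mulr0.
case: (Gk k l g); last by rewrite !(mul0r, mulr0).
have fact_split : (c.-1) ^_ g.-1 * (c - g)`! = (c.-1)`!.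
  by rewrite -(ffact_fact (_ : g.-1 <= c.-1)); [congr (_ * _`!) | ]; lia.
rewrite -fact_split !natrM natrX.
have g_neq0 : (g%:R : rat) != 0%R by rewrite pnatr_eq0 -lt0n.
rewrite [(g%:R * _)%R]mulrC -!mulrA mulKf //; ring.
Qed.

Lemma signed_roots_formula c A : sigma_stable sigma A -> #|A| = l * c ->
  signed_roots sigma k A = ((c`!)%:R * fps_exp (Fseries k l) c)%R.
Proof.
elim/ltn_ind: c A => c IH A A_stable cA.
have [c0|c_gt0] := posnP c.
  move: cA; rewrite c0 muln0 => /eqP; rewrite cards_eq0 => /eqP ->.
  by rewrite signed_roots_set0 /fps_exp big_ord1 /= /fps_one fact0 divr1.
have [x xA] : exists x, x \in A by apply/set0Pn; rewrite -card_gt0 cA muln_gt0 l_gt0.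
set E := fps_exp (Fseries k l).
pose h g := ((-1) ^+ (l * g).+1 * ((c - g)`!%:R * E (c - g)%N) : rat)%R.
have term t : t \in root_cycles sigma k A x ->
    (sgn t * signed_roots sigma k (A :\: porbit t x) = h (gcdn #|porbit t x| k))%R.
  move=> t_cyc; have [rest_stable rest_card] := root_cycle_rest A_stable cA t_cyc.
  have g_gt0 : 0 < gcdn #|porbit t x| k by rewrite gcdn_gt0 k_gt0 orbT.
  rewrite (sgn_root_cycle t_cyc) (IH _ _ _ rest_stable rest_card) //.
  by have := root_cycle_gcd_le t_cyc cA; lia.
have F0 : Fseries k l 0 = 0%R.
  by rewrite /Fseries /Gk mul0n gcd0n; case: eqP => // k0; move: k_gt0; rewrite k0.
rewrite (signed_roots_decomp _ _ xA) (eq_bigr _ term) (sum_root_cycles_by_gcd _ _ cA).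
rewrite -(prednK c_gt0) factS natrM -mulrA (prednK c_gt0) mulrCA.
rewrite /E (fps_exp_rec _ F0) mulr_sumr; apply: eq_bigr => g _.
by rewrite (card_root_cycles_gcd_formula _ A_stable xA cA) count_term // -ltnS.
Qed.

End SignedCount.

Lemma signed_roots_setT (T : finType) (s : {perm T}) k :
  signed_roots s k setT = ((re_k k s)%:R - (ro_k k s)%:R)%R.
Proof.
have rootsT t : (t \in roots_on s k setT) = (t ^+ k == s)%g.
  apply/roots_onP/eqP => [[_ F]|E].
    by apply/permP => z; apply: F; rewrite in_setT.
  by split => [|z _]; [apply/subsetP => z; rewrite inE | rewrite E].
rewrite /signed_roots (bigID (fun t => odd_perm t)) /= addrC; congr (_ + _)%R.
  rewrite (eq_bigr (fun _ => 1%R)) => [|t /andP[_ /negbTE]]; last by rewrite /sgn => ->.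
  rewrite sumr_const /re_k; congr (_ *+ _)%R; apply: eq_card => t.
  by rewrite [in RHS]in_set -rootsT.
rewrite (eq_bigr (fun _ => (-1)%R)) => [|t /andP[_]]; last by rewrite /sgn => ->.
rewrite sumr_const /ro_k mulNrn; congr (- (_ *+ _))%R; apply: eq_card => t.
by rewrite [in RHS]in_set -rootsT.
Qed.

Theorem lemma2 (k l : nat) (hk : (0 < k)%N) (hl : (0 < l)%N)
  (sigma : forall c : nat, {perm 'I_(l * c)})
  (hsigma : forall c : nat, has_cycle_type l c (sigma c)) :
  forall c : nat,
    (((re_k k (sigma c))%:R - (ro_k k (sigma c))%:R) / (c`!)%:R : rat)%R
    = fps_exp (Fseries k l) c.
Proof.
move=> c; have [_ sigma_cycles] := hsigma c.
have setT_stable : sigma_stable (sigma c) setT by move=> z _; rewrite in_setT.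
have card_setT : #|[set: 'I_(l * c)]| = l * c by rewrite cardsT card_ord.
rewrite -signed_roots_setT.
rewrite (signed_roots_formula hk hl sigma_cycles setT_stable card_setT).
by rewrite mulrC mulKf // pnatr_eq0 -lt0n fact_gt0.
Qed.
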